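(* Let $a$ and $i$ be positive integers. Then $$\binom{3a+i}{a+i}=\sum_{k\geq0}\frac{i+3k}{i+k}\binom{i+k}{2k}\binom{3a+i}{a-k}=\sum_{k\geq0}\left[\binom{i+k}{2k}+\binom{i+k-1}{2k-1}\right]\binom{3a+i}{a-k}.$$
   Context: Ordinary binomial coefficients, with $\binom{n}{m}=0$ when $m<0$ or $m>n$. *)

From mathcomp Require Import all_boot all_order all_algebra.
Set Implicit Arguments. Unset Strict Implicit. Unset Printing Implicit Defensive.
Import Order.TTheory GRing.Theory Num.Theory.

(* Binomial coefficient with integer arguments: binomZ n m = 'C(n, m) for
   n, m >= 0, and 0 when m < 0 (or n < 0, not needed here). *)
Definition binomZ (n m : int) : nat :=
  match n, m with
  | Posz n', Posz m' => 'C(n', m')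
  | _, _ => 0
  end.

From mathcomp Require Import all_boot all_order all_algebra.
From mathcomp Require Import ring zify.
Set Implicit Arguments. Unset Strict Implicit. Unset Printing Implicit Defensive.
Import Order.TTheory GRing.Theory Num.Theory.

(* With rising factorials, put r_x(i,k) = (x-k+1)^(i+k) / (2x+1)^(i+k); for
   x = a this is C(3a+i,a-k) / C(3a+i,a+i) when k <= a, and 0 when k > a.
   The second identity thus says that F(i,k) = c(i,k) r_x(i,k), where
   c(i,k) = C(i+k,2k) + C(i+k-1,2k-1), sums to 1 over k.  This holds for
   every x >= 0, by induction on i: with G(i,k) = C(i+k-1,2k-2) r_x(i,k),
   (F, G) is a WZ pair, F(i+1,k) - F(i,k) = G(i,k) - G(i,k+1), so the sum
   over k telescopes.  Cleared of denominators, this relation is linear in x,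
   and its two coefficients follow from Pascal's rule and absorption.  The
   first identity follows from (i+k) c(i,k) = (i+3k) C(i+k,2k). *)

Lemma mul_bin_ffact n m s :
  'C(n, m) * (n - m) ^_ s = 'C(n, m + s) * (m + s) ^_ s.
Proof.
elim: s => [|s IHs]; first by rewrite !addn0.
rewrite ffactnSr mulnA IHs addnS ffactSS mulnA [_ * _.+1]mulnC mul_bin_left.
by rewrite subnDA mulnC mulnA.
Qed.

Definition wz_coef i k :=
  'C(i + k, k.*2) + (if k is j.+1 then 'C(i + j, j.*2.+1) else 0).

Definition wz_cert i k := if k is j.+1 then 'C(i + j, j.*2) else 0.

Lemma wz_coefE i k :
  'C(i + k, 2 * k) + binomZ (Posz (i + k) - 1)%R (Posz (2 * k) - 1)%R = wz_coef i k.
Proof.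
rewrite mul2n /wz_coef; case: k => [|k]; first by case: i.
by rewrite addnS doubleS /= !subn1.
Qed.

Lemma wz_coef0 i : wz_coef i 0 = 1.
Proof. by rewrite /wz_coef addn0 bin0. Qed.

Lemma wz_coef0n k : wz_coef 0 k.+1 = 0.
Proof. by rewrite /wz_coef !bin_small //; lia. Qed.

Lemma wz_cert_small i k : i < k -> wz_cert i k.+1 = 0.
Proof. by move=> lt_ik; rewrite /= bin_small //; lia. Qed.

Lemma mul_wz_coef i k : wz_coef i k * (i + k) = (i + 3 * k) * 'C(i + k, k.*2).
Proof.
case: k => [|k]; first by rewrite wz_coef0 addn0 bin0 mul1n muln1.
have := mul_bin_diag (i + k).+1 k.*2.+1.
rewrite /wz_coef addnS doubleS /=; nia.
Qed.

Lemma wz_coef_recurrence_lin i k :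
  wz_coef i.+1 k + wz_cert i k.+1 = (wz_coef i k + wz_cert i k).*2.
Proof.
case: k => [|k]; first by rewrite !wz_coef0 /= addn0 bin0.
rewrite /wz_coef /= !addSn !addnS doubleS.
have := binS (i + k).+1 k.*2.+1; have := binS (i + k) k.*2.
lia.
Qed.

Lemma wz_coef_recurrence_const i k :
  wz_coef i.+1 k * i.+1 = (wz_coef i k + wz_cert i k) * (i + k).+1 + wz_cert i k.+1 * k.
Proof.
case: k => [|k]; first by rewrite !wz_coef0 /=; lia.
rewrite /wz_coef /= !addSn !addnS doubleS.
have [lt_ik | le_ki] := ltnP i k; first by rewrite !bin_small; lia.
have := mul_bin_left (i + k).+1 k.*2.+1.
have -> : (i + k).+1 - k.*2.+1 = i - k by lia.
have := binS (i + k).+1 k.*2.+1; have := binS (i + k) k.*2.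
nia.
Qed.

Local Open Scope ring_scope.

Section BinRatio.

Variable R : numFieldType.
Implicit Types (x y : R).

Definition rising y n := \prod_(t < n) (y + t%:R).

Lemma risingSr y n : rising y n.+1 = rising y n * (y + n%:R).
Proof. by rewrite /rising big_ord_recr. Qed.

Lemma risingSl y n : rising y n.+1 = y * rising (y + 1) n.
Proof.
rewrite /rising big_ord_recl addr0; congr (_ * _); apply: eq_bigr => t _.
by rewrite lift0 -natr1 addrA addrAC.
Qed.

Lemma rising_gt0 y n : 0 < y -> 0 < rising y n.
Proof. by move=> y_gt0; apply: prodr_gt0 => t _; rewrite ltr_wpDr. Qed.

Lemma rising_natr m n : rising m.+1%:R n = ((m + n) ^_ n)%:R.
Proof.
elim: n => [|n IHn]; first by rewrite /rising big_ord0.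
by rewrite risingSr IHn addnS ffactSS natrM mulrC -natrD addSn.
Qed.

Lemma rising_oppn_eq0 m n : (m < n)%N -> rising (- m%:R) n = 0.
Proof. by move=> lt_mn; rewrite /rising (bigD1 (Ordinal lt_mn)) //= addNr mul0r. Qed.

Definition bin_ratio x i k :=
  rising (x - k%:R + 1) (i + k) / rising (x *+ 2 + 1) (i + k).

Lemma bin_ratio00 x : bin_ratio x 0 0 = 1.
Proof. by rewrite /bin_ratio /rising !big_ord0 divr1. Qed.

Lemma bin_ratio_natr a i k : (k <= a)%N ->
  bin_ratio a%:R i k * 'C(3 * a + i, a + i)%:R = 'C(3 * a + i, a - k)%:R.
Proof.
move=> le_ka; rewrite /bin_ratio.
have -> : a%:R - k%:R + 1 = (a - k).+1%:R :> R by rewrite -natr1 natrB.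
have -> : a%:R *+ 2 + 1 = a.*2.+1%:R :> R by rewrite -natr1 -addnn natrD mulr2n.
rewrite !rising_natr.
have := mul_bin_ffact (3 * a + i) (a - k) (i + k).
have -> : (3 * a + i - (a - k) = a.*2 + (i + k))%N by lia.
have -> : (a - k + (i + k) = a + i)%N by lia.
move=> shift; rewrite mulrAC -natrM mulnC -shift natrM mulfK //.
by rewrite pnatr_eq0 -lt0n ffact_gt0 leq_addl.
Qed.

Lemma bin_ratio_natr_eq0 a i k : (a < k)%N -> bin_ratio a%:R i k = 0.
Proof.
move=> lt_ak; rewrite /bin_ratio.
have -> : a%:R - k%:R + 1 = - (k - a.+1)%:R :> R by rewrite natrB // -natr1; ring.
by rewrite rising_oppn_eq0 ?mul0r //; lia.
Qed.

Section Shift.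

Variable x : R.
Hypothesis x_ge0 : 0 <= x.

Lemma bin_ratio_denom_gt0 n : 0 < x *+ 2 + 1 + n%:R.
Proof. by rewrite -addrA ltr_wpDl ?mulrn_wge0 // ltr_pwDl. Qed.

Lemma bin_ratioSi i k :
  bin_ratio x i.+1 k * (x *+ 2 + 1 + (i + k)%:R) = bin_ratio x i k * (x + i.+1%:R).
Proof.
rewrite /bin_ratio addSn !risingSr.
have := bin_ratio_denom_gt0 (i + k).
have := rising_gt0 (i + k) (bin_ratio_denom_gt0 0); rewrite addr0.
rewrite -natr1 natrD => den_gt0 last_gt0; field.
by rewrite mulr_natr !gt_eqF.
Qed.

Lemma bin_ratioSk i k :
  bin_ratio x i k.+1 * (x *+ 2 + 1 + (i + k)%:R) = bin_ratio x i k * (x - k%:R).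
Proof.
rewrite /bin_ratio addnS risingSl risingSr.
have -> : x - k.+1%:R + 1 = x - k%:R by rewrite -natr1; ring.
have := bin_ratio_denom_gt0 (i + k).
have := rising_gt0 (i + k) (bin_ratio_denom_gt0 0); rewrite addr0.
rewrite natrD => den_gt0 last_gt0; field.
by rewrite mulr_natr !gt_eqF.
Qed.

Lemma wz_coef_recurrence i k :
  (wz_coef i.+1 k)%:R * (x + i.+1%:R) =
  (wz_coef i k + wz_cert i k)%:R * (x *+ 2 + 1 + (i + k)%:R)
  - (wz_cert i k.+1)%:R * (x - k%:R).
Proof.
move: (wz_coef_recurrence_lin i k) (wz_coef_recurrence_const i k).
move: (wz_coef i.+1 k) (wz_coef i k) (wz_cert i k) (wz_cert i k.+1) => c' c d d'.
move=> /(congr1 (GRing.natmul (1 : R))) lin /(congr1 (GRing.natmul (1 : R))) const.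
move: lin const; rewrite -addnn !natrD !natrM -!natr1 !natrD => lin const.
rewrite mulrDr const.
have -> : c'%:R = (c%:R + d%:R) *+ 2 - d'%:R :> R by rewrite mulr2n -lin addrK.
ring.
Qed.

Lemma wz_step i k :
  (wz_coef i.+1 k)%:R * bin_ratio x i.+1 k =
  (wz_coef i k)%:R * bin_ratio x i k +
  ((wz_cert i k)%:R * bin_ratio x i k - (wz_cert i k.+1)%:R * bin_ratio x i k.+1).
Proof.
apply: (mulIf (lt0r_neq0 (bin_ratio_denom_gt0 (i + k)))).
rewrite -mulrA bin_ratioSi mulrDl mulrBl.
rewrite -[(wz_cert i k.+1)%:R * _ * _]mulrA bin_ratioSk.
by rewrite mulrCA wz_coef_recurrence natrD; ring.
Qed.

Lemma sum_wz_coef_bin_ratio i n : (i < n)%N ->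
  \sum_(0 <= k < n) (wz_coef i k)%:R * bin_ratio x i k = 1.
Proof.
elim: i n => [|i IHi] n lt_in.
  case: n lt_in => // n _; rewrite big_nat_recl // wz_coef0 bin_ratio00 mulr1.
  by rewrite big1 ?addr0 // => k _; rewrite wz_coef0n mul0r.
rewrite (eq_bigr _ (fun k _ => wz_step i k)) big_split /= IHi 1?ltnW //.
rewrite (telescope_sumr_eq (fun k => - ((wz_cert i k)%:R * bin_ratio x i k))) //.
  by case: n lt_in => // n lt_in; rewrite wz_cert_small // /= !mul0r subrr addr0.
by move=> k _; rewrite opprK addrC.
Qed.

End Shift.

End BinRatio.

Lemma bin_sum_wz_coef a i :
  ('C(3 * a + i, a + i) = \sum_(0 <= k < a.+1) wz_coef i k * 'C(3 * a + i, a - k))%N.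
Proof.
apply/eqP; rewrite -(eqr_nat rat) natr_sum; apply/eqP.
have lt_in : (i < a.+1 + i)%N by lia.
have := sum_wz_coef_bin_ratio (ler0n rat a) lt_in.
rewrite (@big_cat_nat _ _ _ a.+1) //=; last by rewrite leq_addr.
have -> : \sum_(a.+1 <= k < a.+1 + i) (wz_coef i k)%:R * bin_ratio (a%:R : rat) i k = 0.
  rewrite big_nat_cond big1 // => k /andP[/andP[lt_ak _] _].
  by rewrite bin_ratio_natr_eq0 ?mulr0.
rewrite addr0 => sum1; rewrite -[LHS]mul1r -{1}sum1 mulr_suml.
apply: eq_big_nat => k /andP[_ le_ka].
by rewrite natrM -mulrA bin_ratio_natr.
Qed.

Lemma wz_coef_ratio (R : numFieldType) i k : (0 < i)%N ->
  (i + 3 * k)%:R / (i + k)%:R * 'C(i + k, 2 * k)%:R = (wz_coef i k)%:R :> R.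
Proof.
move=> i_gt0; rewrite mul2n mulrAC -natrM -mul_wz_coef natrM mulfK //.
by rewrite pnatr_eq0; lia.
Qed.

Theorem lemma2 (a i : nat) (ha : (0 < a)%N) (hi : (0 < i)%N) :
  ('C(3 * a + i, a + i))%:R =
    \sum_(0 <= k < a.+1)
      (((i + 3 * k)%:R / (i + k)%:R) * ('C(i + k, 2 * k))%:R
        * ('C(3 * a + i, a - k))%:R : rat)
  /\
  ('C(3 * a + i, a + i))%:R =
    \sum_(0 <= k < a.+1)
      ((('C(i + k, 2 * k) + binomZ (Posz (i + k) - 1) (Posz (2 * k) - 1))%N)%:R
        * ('C(3 * a + i, a - k))%:R : rat).
Proof.
have sum_coef := congr1 (GRing.natmul (1 : rat)) (bin_sum_wz_coef a i).
rewrite natr_sum in sum_coef.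
split; rewrite sum_coef; apply: eq_big_nat => k _; rewrite natrM.
  by rewrite wz_coef_ratio.
by rewrite wz_coefE.
Qed.
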